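(* For every $d\ge 1$ there is a constant $C_d$ such that for every $\sigma\in(0,1)$ and every finite $\sigma$-exposed set $L$ of closed line segments in $\mathbb{R}^d$, the density of $L$ is at most $C_d\,\sigma^{-2d-2}$.
   Context: For sets $X, Y\subseteq\mathbb{R}^d$ and $\sigma>0$, $X$ $\sigma$-shadows $Y$ if $\max_{q\in Y} \mathrm{dist}(q, X) \le \sigma\cdot \mathrm{diam}(Y)$, where $\mathrm{dist}(q,X)=\min_{p\in X}\|q-p\|$. A set of objects is $\sigma$-exposed if no object in the set $\sigma$-shadows another (distinct) object of the set. The density of a finite set $\mathcal{O}$ of objects in $\mathbb{R}^d$ is the maximum, over all closed balls $B$, of the number of objects $o\in\mathcal{O}$ that intersect $B$ and satisfy $\mathrm{diam}(o)\ge \mathrm{diam}(B)$. *)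

From Stdlib Require Import Reals List ClassicalEpsilon.
From mathcomp Require Import ssreflect ssrfun ssrbool eqtype ssrnat seq fintype bigop.
Open Scope R_scope.

Definition pt (d : nat) := 'I_d -> R.

Definition edist {d : nat} (x y : pt d) : R :=
  sqrt (\big[Rplus/0]_(i < d) Rsqr (x i - y i)).

Definition seg {d : nat} (a b : pt d) : pt d -> Prop :=
  fun p => exists t, 0 <= t <= 1 /\ forall i, p i = (1 - t) * a i + t * b i.

Definition is_segment {d : nat} (S : pt d -> Prop) : Prop :=
  exists a b : pt d, (exists i, a i <> b i) /\ forall p, S p <-> seg a b p.

(* supremum of a set of reals (0 if it has no least upper bound) *)
Definition Rsup (E : R -> Prop) : R := epsilon (inhabits 0) (fun m => is_lub E m).

Definition diam {d : nat} (S : pt d -> Prop) : R :=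
  Rsup (fun x => exists p q, S p /\ S q /\ x = edist p q).

(* X sigma-shadows Y: max_{q in Y} dist(q,X) <= sigma diam(Y).
   For compact X (all objects here) dist(q,X) is attained, so this says
   every q in Y has some p in X with |q-p| <= sigma diam(Y). *)
Definition shadows {d : nat} (sigma : R) (X Y : pt d -> Prop) : Prop :=
  forall q, Y q -> exists p, X p /\ edist q p <= sigma * diam Y.

Definition exposed {d : nat} (sigma : R) (L : list (pt d -> Prop)) : Prop :=
  forall i j, (i < List.length L)%coq_nat -> (j < List.length L)%coq_nat -> i <> j ->
    ~ shadows sigma (List.nth i L (fun _ => False)) (List.nth j L (fun _ => False)).

Definition closed_ball {d : nat} (c : pt d) (r : R) : pt d -> Prop :=
  fun p => edist p c <= r.

Definition density_le {d : nat} (L : list (pt d -> Prop)) (k : R) : Prop :=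
  forall (c : pt d) (r : R), 0 < r ->
  forall I : list nat, NoDup I ->
    (forall i, In i I ->
       (i < List.length L)%coq_nat /\
       (exists p, List.nth i L (fun _ => False) p /\ closed_ball c r p) /\
       diam (closed_ball c r) <= diam (List.nth i L (fun _ => False))) ->
    INR (List.length I) <= k.

(* Fix a ball B(c, r) and the segments of L meeting it whose length l is at least r.
   Each gets a signature: its length class min(floor(l / r), M) with M ~ 4 / sigma, and
   the cells containing its endpoints in the grid through c of mesh sigma N / (4 d),
   where the scale N is r (floor(l / r) + 1) for short segments and l for long ones.
   If two segments share a signature, one sigma-shadows the other: for short ones the
   endpoints are within sigma N / 4 <= sigma l / 2 of each other; for a long pair
   l' <= l, the homothety of ratio l' / l about a point of the longer segment inside
   the ball moves its endpoints to within sigma l' / 4 + r <= sigma l' / 2 of those of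
   the shorter one.  Since L is exposed, signatures are injective, and as endpoints
   lie within 2 l of c there are at most M (2 K + 1)^(2 d) = O(sigma^(-2d-1)) of them,
   with K ~ 8 d / sigma. *)

From Stdlib Require Import Reals List Lra Lia ZArith Rgeom ClassicalEpsilon.
From mathcomp Require Import ssreflect ssrfun ssrbool eqtype ssrnat seq fintype bigop.
Open Scope R_scope.

Section RealSums.

Context {T : Type}.
Implicit Types (r : seq T) (F G : T -> R).

Lemma sumR_ge0 r F : (forall i, 0 <= F i) -> 0 <= \big[Rplus/0]_(i <- r) F i.
Proof.
move=> F_ge0; elim: r => [|x r IH]; first by rewrite big_nil; lra.
by rewrite big_cons; have := F_ge0 x; lra.
Qed.

Lemma sumR_scale r F c :
  \big[Rplus/0]_(i <- r) (c * F i) = c * \big[Rplus/0]_(i <- r) F i.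
Proof.
elim: r => [|x r IH]; first by rewrite !big_nil; ring.
by rewrite !big_cons IH; ring.
Qed.

Lemma sumR_le_size r F B :
  (forall i, F i <= B) -> \big[Rplus/0]_(i <- r) F i <= INR (size r) * B.
Proof.
move=> F_le; elim: r => [|x r IH]; first by rewrite big_nil /=; lra.
by rewrite big_cons [size _]/= S_INR; have := F_le x; lra.
Qed.

(* Minkowski's inequality; the induction step is the triangle inequality in the
   plane for the points (F x, sqrt U), 0 and (- G x, - sqrt V). *)
Lemma sqrt_sumR_sqr_add r F G :
  sqrt (\big[Rplus/0]_(i <- r) Rsqr (F i + G i)) <=
  sqrt (\big[Rplus/0]_(i <- r) Rsqr (F i)) + sqrt (\big[Rplus/0]_(i <- r) Rsqr (G i)).
Proof.
elim: r => [|x r IH]; first by rewrite !big_nil sqrt_0; lra.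
rewrite !big_cons.
set U := \big[Rplus/0]_(i <- r) Rsqr (F i).
set V := \big[Rplus/0]_(i <- r) Rsqr (G i).
set W := \big[Rplus/0]_(i <- r) Rsqr (F i + G i).
have U_ge0 : 0 <= U by apply: sumR_ge0 => i; apply: Rle_0_sqr.
have V_ge0 : 0 <= V by apply: sumR_ge0 => i; apply: Rle_0_sqr.
have W_ge0 : 0 <= W by apply: sumR_ge0 => i; apply: Rle_0_sqr.
have sqrtW_le : sqrt (Rsqr (F x + G x) + W) <=
                sqrt (Rsqr (F x + G x) + Rsqr (sqrt U + sqrt V)).
  apply: sqrt_le_1_alt; rewrite -[X in _ + X <= _](Rsqr_sqrt W) //.
  have sqrtU_ge0 := sqrt_pos U; have sqrtV_ge0 := sqrt_pos V.
  by apply/Rplus_le_compat_l/Rsqr_incr_1; [|exact: sqrt_pos|lra].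
have := triangle (F x) (sqrt U) (- G x) (- sqrt V) 0 0; rewrite /dist_euc.
have -> : Rsqr (F x - 0) + Rsqr (sqrt U - 0) = Rsqr (F x) + U.
  by rewrite !Rminus_0_r Rsqr_sqrt.
have -> : Rsqr (0 - - G x) + Rsqr (0 - - sqrt V) = Rsqr (G x) + V.
  by rewrite !Rminus_0_l !Ropp_involutive Rsqr_sqrt.
have -> : Rsqr (F x - - G x) + Rsqr (sqrt U - - sqrt V) =
          Rsqr (F x + G x) + Rsqr (sqrt U + sqrt V) by rewrite /Rsqr; ring.
lra.
Qed.

End RealSums.

Lemma sumR_ge_term {T : eqType} (r : seq T) (F : T -> R) i :
  (forall i, 0 <= F i) -> i \in r -> F i <= \big[Rplus/0]_(i <- r) F i.
Proof.
move=> F_ge0; elim: r => [|x r IH] //; rewrite in_cons big_cons => /orP[/eqP->|i_in].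
  by have := sumR_ge0 r F F_ge0; lra.
by have := IH i_in; have := F_ge0 x; lra.
Qed.

Lemma sumR_delta {T : eqType} (r : seq T) (i0 : T) v :
  uniq r -> i0 \in r -> \big[Rplus/0]_(i <- r) (if i == i0 then v else 0) = v.
Proof.
elim: r => [|x r IH] //= /andP[x_notin uniq_r]; rewrite in_cons big_cons.
case: (eqVneq x i0) => [<- _ | neq_x i0_in]; last by rewrite IH //; ring.
rewrite (eq_big_seq (fun _ => 0)) => [|i i_in]; last by case: eqP i_in x_notin => // ->->.
suff -> : \big[Rplus/0]_(j <- r) 0 = 0 by ring.
by elim: r {IH x_notin uniq_r} => [|y r IH]; rewrite ?big_nil ?big_cons ?IH; ring.
Qed.

Definition vnorm {d : nat} (u : 'I_d -> R) : R :=
  sqrt (\big[Rplus/0]_(i < d) Rsqr (u i)).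

Section EuclideanNorm.

Context {d : nat}.
Implicit Types (u v : 'I_d -> R) (x y z : pt d).

Lemma edistE x y : edist x y = vnorm (fun i => x i - y i).
Proof. by []. Qed.

Lemma vnorm_ge0 u : 0 <= vnorm u.
Proof. exact: sqrt_pos. Qed.

Lemma eq_vnorm u v : (forall i, u i = v i) -> vnorm u = vnorm v.
Proof. by move=> uv; rewrite /vnorm (eq_bigr (fun i => Rsqr (v i))) // => i _; rewrite uv. Qed.

Lemma vnormZ u c : vnorm (fun i => c * u i) = Rabs c * vnorm u.
Proof.
rewrite /vnorm (eq_bigr (fun i => Rsqr c * Rsqr (u i))) => [|i _]; last exact: Rsqr_mult.
rewrite sumR_scale sqrt_mult ?sqrt_Rsqr_abs //; first exact: Rle_0_sqr.
by apply: sumR_ge0 => i; apply: Rle_0_sqr.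
Qed.

Lemma vnormD u v : vnorm (fun i => u i + v i) <= vnorm u + vnorm v.
Proof. exact: sqrt_sumR_sqr_add. Qed.

Lemma abs_coord_le_vnorm u i : Rabs (u i) <= vnorm u.
Proof.
rewrite -sqrt_Rsqr_abs; apply: sqrt_le_1_alt.
apply: (sumR_ge_term _ (fun j => Rsqr (u j))); last exact: mem_index_enum.
by move=> j; apply: Rle_0_sqr.
Qed.

Lemma vnorm_le_coord_bound u B :
  0 <= B -> (forall i, Rabs (u i) <= B) -> vnorm u <= INR d * B.
Proof.
move=> B_ge0 u_le.
have sum_le : \big[Rplus/0]_(i < d) Rsqr (u i) <= INR d * Rsqr B.
  rewrite -[in INR d](size_enum_ord d) enumT.
  apply: sumR_le_size => i; rewrite Rsqr_abs.
  by apply: Rsqr_incr_1; [exact: u_le|exact: Rabs_pos|].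
have d_le_sqr : INR d <= INR d * INR d.
  by case: (d) => [|n]; rewrite ?S_INR /=; [lra | have := pos_INR n; nra].
have d_ge0 := pos_INR d.
rewrite /vnorm -(sqrt_Rsqr (INR d * B)); last exact: Rmult_le_pos.
apply/sqrt_le_1_alt/(Rle_trans _ _ _ sum_le); rewrite Rsqr_mult.
by apply: Rmult_le_compat_r; [exact: Rle_0_sqr | rewrite /Rsqr].
Qed.

Lemma edist_sym x y : edist x y = edist y x.
Proof.
rewrite !edistE (eq_vnorm (fun i => x i - y i) (fun i => -1 * (y i - x i))) => [|i]; last ring.
by rewrite vnormZ Rabs_Ropp Rabs_R1; ring.
Qed.

Lemma edist_triangle x y z : edist x z <= edist x y + edist y z.
Proof.
rewrite !edistE (eq_vnorm _ (fun i => (x i - y i) + (y i - z i))) => [|i]; last ring.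
exact: vnormD.
Qed.

Lemma edist_refl x : edist x x = 0.
Proof.
rewrite edistE (eq_vnorm _ (fun i => 0 * 0)) => [|i]; last ring.
by rewrite (vnormZ (fun _ => 0)) Rabs_R0; ring.
Qed.

End EuclideanNorm.

Lemma Rsup_lub (E : R -> Prop) m : is_lub E m -> Rsup E = m.
Proof.
move=> lub_m; have [ub_sup least_sup] : is_lub E (Rsup E).
  by rewrite /Rsup; apply: epsilon_spec; exists m.
by case: lub_m => ub_m least_m; apply: Rle_antisym; [exact: least_sup | exact: least_m].
Qed.

Section Segments.

Context {d : nat}.
Implicit Types (a b c p q x y : pt d) (S : pt d -> Prop).

Lemma seg_left a b : seg a b a.
Proof. by exists 0; split=> [|i]; [lra | ring]. Qed.

Lemma seg_right a b : seg a b b.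
Proof. by exists 1; split=> [|i]; [lra | ring]. Qed.

Lemma seg_convex a b x y l :
  seg a b x -> seg a b y -> 0 <= l <= 1 -> seg a b (fun i => l * x i + (1 - l) * y i).
Proof.
move=> [t [t01 xE]] [s [s01 yE]] l01.
exists (l * t + (1 - l) * s); split=> [|i]; first by nra.
by rewrite xE yE; ring.
Qed.

Lemma seg_edist_le a b p q : seg a b p -> seg a b q -> edist p q <= edist a b.
Proof.
move=> [t [t01 pE]] [s [s01 qE]].
rewrite !edistE (eq_vnorm _ (fun i => (s - t) * (a i - b i))) => [|i]; last by rewrite pE qE; ring.
rewrite vnormZ; have : Rabs (s - t) <= 1 by apply: Rabs_le; lra.
by have := vnorm_ge0 (fun i => a i - b i); nra.
Qed.

Lemma diam_seg S a b : (forall p, S p <-> seg a b p) -> diam S = edist a b.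
Proof.
move=> SE; apply: Rsup_lub; split=> [_ [p [q [Sp [Sq ->]]]] | m ub_m].
  by apply: seg_edist_le; apply/SE.
by apply: ub_m; exists a, b; rewrite !SE; split; [exact: seg_left | split; [exact: seg_right|]].
Qed.

Lemma diam_closed_ball_ge (i0 : 'I_d) c r : 0 < r -> r <= diam (closed_ball c r).
Proof.
move=> r_gt0.
set E := fun l => exists p q, closed_ball c r p /\ closed_ball c r q /\ l = edist p q.
have E_bounded : bound E.
  exists (2 * r) => _ [p [q [cp [cq ->]]]]; rewrite /closed_ball in cp cq.
  by have := edist_triangle p c q; rewrite (edist_sym c q); lra.
pose e i := if i == i0 then c i + r else c i.
have ec : edist e c = r.
  rewrite edistE /vnorm (eq_bigr (fun i => if i == i0 then Rsqr r else 0)) => [|i _].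
    by rewrite sumR_delta ?sqrt_Rsqr ?index_enum_uniq ?mem_index_enum //; lra.
  by rewrite /e; case: (i == i0); [congr Rsqr; ring | rewrite Rminus_diag Rsqr_0].
have Er : E r.
  exists e, c; rewrite /closed_ball ec edist_refl; split; [lra | split; [lra | done]].
have [m lub_m] := completeness E E_bounded (ex_intro _ r Er).
by rewrite /diam -/E (Rsup_lub _ _ lub_m); apply: (proj1 lub_m).
Qed.

Definition seg_near (e : R) (a b a' b' : pt d) : Prop :=
  forall q, seg a' b' q -> exists p, seg a b p /\ edist q p <= e.

Lemma seg_near_le e e' a b a' b' :
  e <= e' -> seg_near e a b a' b' -> seg_near e' a b a' b'.
Proof. by move=> le_e near q /near [p [abp qp]]; exists p; split; [|lra]. Qed.

Lemma seg_near_endpoints e a b a' b' ya yb :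
  seg a b ya -> seg a b yb -> edist a' ya <= e -> edist b' yb <= e ->
  seg_near e a b a' b'.
Proof.
move=> ya_in yb_in a'_near b'_near q [t [t01 qE]].
exists (fun i => (1 - t) * ya i + (1 - (1 - t)) * yb i); split.
  by apply: seg_convex => //; lra.
rewrite edistE (eq_vnorm _ (fun i => (1 - t) * (a' i - ya i) + t * (b' i - yb i))) => [|i];
  last by rewrite qE; ring.
apply: Rle_trans (vnormD _ _) _.
rewrite !vnormZ -!edistE !Rabs_right; try lra.
by nra.
Qed.

Lemma shadows_seg_near sigma S T a b a' b' :
  (forall p, S p <-> seg a b p) -> (forall p, T p <-> seg a' b' p) ->
  seg_near (sigma * edist a' b') a b a' b' -> shadows sigma S T.
Proof.
move=> SE TE near q /TE /near [p [abp qp]].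
by exists p; rewrite SE (diam_seg _ _ _ TE).
Qed.

End Segments.

Lemma Int_part_eq_close x y : Int_part x = Int_part y -> Rabs (x - y) < 1.
Proof.
move=> E; have := base_Int_part x; have := base_Int_part y; rewrite E => *.
by apply: Rabs_def1; lra.
Qed.

Lemma In_enum_ord n (k : 'I_n) : List.In k (enum 'I_n).
Proof.
have : k \in enum 'I_n by rewrite mem_enum.
elim: (enum 'I_n) => [|x s IH] //; rewrite in_cons => /orP[/eqP->|/IH]; by [left | right].
Qed.

Lemma length_enum_ord n : List.length (enum 'I_n) = n.
Proof. by rewrite -[RHS](size_enum_ord n); elim: (enum 'I_n) => //= x s ->. Qed.

Definition cell {d : nat} (c : pt d) (m : R) (x : pt d) : list Z :=
  List.map (fun k => Int_part ((x k - c k) / m)) (enum 'I_d).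

Section Grid.

Context {d : nat}.
Implicit Types (a b c p x : pt d).

Lemma cell_coord_eq c m m' x x' k :
  cell c m' x' = cell c m x -> Int_part ((x' k - c k) / m') = Int_part ((x k - c k) / m).
Proof. by move=> /map_ext_in_iff; apply; apply: In_enum_ord. Qed.

(* The homothety of ratio [m' / m] about [c] maps the grid of mesh [m] onto that of
   mesh [m'], so it moves [x] to within [INR d * m'] of [x']; moving its centre to
   [p] costs at most [(1 - m' / m) r]. *)
Lemma edist_cell_homothety c p x x' r m m' :
  0 < m' <= m -> edist p c <= r -> cell c m' x' = cell c m x ->
  edist x' (fun k => m' / m * x k + (1 - m' / m) * p k) <= INR d * m' + (1 - m' / m) * r.
Proof.
move=> [m'_gt0 le_m'm] pc same_cell.
have ratio_le1 : m' / m <= 1 by apply: (Rmult_le_reg_r m); [lra | field_simplify; lra].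
pose u' k := (x' k - c k) / m'; pose u k := (x k - c k) / m.
rewrite edistE (eq_vnorm _ (fun k => m' * (u' k - u k) + - (1 - m' / m) * (p k - c k)));
  last by move=> k; rewrite /u /u'; field; lra.
apply: Rle_trans (vnormD _ _) _; apply: Rplus_le_compat.
  apply: vnorm_le_coord_bound => [|k]; first lra.
  rewrite Rabs_mult Rabs_right; last lra.
  have close : Rabs (u' k - u k) < 1 :=
    Int_part_eq_close _ _ (cell_coord_eq c m m' x x' k same_cell).
  by nra.
rewrite vnormZ -edistE Rabs_Ropp Rabs_right; last lra.
by apply: Rmult_le_compat_l; lra.
Qed.

Lemma seg_near_cells c a b p a' b' r m m' :
  0 < m' <= m -> seg a b p -> edist p c <= r ->
  cell c m' a' = cell c m a -> cell c m' b' = cell c m b ->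
  seg_near (INR d * m' + (1 - m' / m) * r) a b a' b'.
Proof.
move=> mm' abp pc same_a same_b.
have ratio01 : 0 <= m' / m <= 1.
  by split; [apply: Rle_mult_inv_pos | apply: (Rmult_le_reg_r m); [|field_simplify]]; lra.
apply: (seg_near_endpoints _ _ _ _ _ _ _ (seg_convex _ _ _ _ _ (seg_left a b) abp ratio01)
          (seg_convex _ _ _ _ _ (seg_right a b) abp ratio01)).
  exact: edist_cell_homothety mm' pc same_a.
exact: edist_cell_homothety mm' pc same_b.
Qed.

End Grid.

Fixpoint words {A : Type} (n : nat) (s : list A) : list (list A) :=
  match n with
  | O => [:: nil]
  | S n => List.map (fun xw => xw.1 :: xw.2) (list_prod s (words n s))
  end.

Lemma length_words {A : Type} n (s : list A) :
  List.length (words n s) = Nat.pow (List.length s) n.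
Proof. by elim: n => [|n IH] //=; rewrite length_map length_prod IH. Qed.

Lemma In_words {A : Type} n (s : list A) w :
  List.length w = n -> (forall x, List.In x w -> List.In x s) -> List.In w (words n s).
Proof.
elim: n w => [|n IH] [|x w] //=; first by left.
move=> [len_w] w_in.
apply/in_map_iff; exists (x, w); split=> //; apply: in_prod; first by apply: w_in; left.
by apply: IH => // y y_in; apply: w_in; right.
Qed.

Definition touches_ball {d : nat} (c : pt d) (r : R) (a b : pt d) : Prop :=
  (exists p, seg a b p /\ edist p c <= r) /\ r <= edist a b.

Lemma touches_ball_endpoint {d : nat} (c a b : pt d) r :
  touches_ball c r a b -> edist a c <= 2 * edist a b /\ edist b c <= 2 * edist a b.
Proof.
move=> [[p [abp pc]] r_le].
have near_p x : seg a b x -> edist x c <= 2 * edist a b.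
  by move=> abx; have := edist_triangle x p c; have := seg_edist_le _ _ _ _ abx abp; lra.
by split; apply: near_p; [exact: seg_left | exact: seg_right].
Qed.

Section Signature.

Variables (d : nat) (c : pt d) (r sigma : R).
Hypotheses (d_ge1 : (1 <= d)%coq_nat) (sigma_gt0 : 0 < sigma) (r_gt0 : 0 < r).

Definition mesh_unit : R := sigma / (4 * INR d).

Definition length_class (l : R) : Z := Int_part (l / r).

(* Segments of length class at least [long_class] are long: [r] is then at most
   [sigma / 4] times their length, so the position of the ball no longer matters. *)
Definition long_class : Z := up (4 / sigma).

(* Short segments are compared at the common scale of their length class, long
   ones at the scale of their own length. *)
Definition scale (l : R) : R :=
  if (length_class l <? long_class)%Z then r * (IZR (length_class l) + 1) else l.

Definition signature (a b : pt d) : Z * list Z * list Z :=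
  let m := scale (edist a b) * mesh_unit in
  (Z.min (length_class (edist a b)) long_class, cell c m a, cell c m b).

Lemma INR_d_gt0 : 0 < INR d.
Proof. by apply: lt_0_INR; lia. Qed.

Lemma mesh_unit_gt0 : 0 < mesh_unit.
Proof. by have := INR_d_gt0; rewrite /mesh_unit => ?; apply: Rdiv_lt_0_compat; lra. Qed.

Lemma INR_d_mesh x : INR d * (x * mesh_unit) = sigma * x / 4.
Proof. by have := INR_d_gt0; rewrite /mesh_unit => ?; field; lra. Qed.

Lemma length_class_le l : r * IZR (length_class l) <= l.
Proof.
have [le_l _] := base_Int_part (l / r); rewrite /length_class.
have := Rmult_le_compat_l r _ _ (Rlt_le _ _ r_gt0) le_l.
by rewrite (_ : r * (l / r) = l) //; field; lra.
Qed.

Lemma length_class_gt l : l < r * (IZR (length_class l) + 1).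
Proof.
have [_ gt_l] := base_Int_part (l / r); rewrite /length_class.
have /(Rmult_lt_compat_l r _ _ r_gt0) : l / r < IZR (Int_part (l / r)) + 1 by lra.
by rewrite (_ : r * (l / r) = l) //; field; lra.
Qed.

Lemma length_class_ge1 l : r <= l -> (1 <= length_class l)%Z.
Proof.
move=> r_le; suff : 0 < IZR (length_class l) by move=> /lt_IZR; lia.
by have := length_class_gt l; nra.
Qed.

Lemma long_class_gt : 4 / sigma < IZR long_class.
Proof. exact: (proj1 (archimed _)). Qed.

Lemma long_seg_near ai bi aj bj :
  touches_ball c r ai bi -> (long_class <= length_class (edist aj bj))%Z ->
  edist aj bj <= edist ai bi ->
  cell c (edist aj bj * mesh_unit) aj = cell c (edist ai bi * mesh_unit) ai ->
  cell c (edist aj bj * mesh_unit) bj = cell c (edist ai bi * mesh_unit) bi ->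
  seg_near (sigma * edist aj bj) ai bi aj bj.
Proof.
move=> [[p [abp pc]] r_le] long le_ji same_a same_b.
have r_small : r * 4 <= sigma * edist aj bj.
  have le_l : r * (4 / sigma) <= edist aj bj.
    apply: Rle_trans (length_class_le _); apply: Rmult_le_compat_l; first lra.
    by have := long_class_gt; have := IZR_le _ _ long; lra.
  have := Rmult_le_compat_l sigma _ _ (Rlt_le _ _ sigma_gt0) le_l.
  by rewrite (_ : sigma * (r * (4 / sigma)) = r * 4) //; field; lra.
have mesh_le : 0 < edist aj bj * mesh_unit <= edist ai bi * mesh_unit.
  by have := mesh_unit_gt0; nra.
apply: seg_near_le (seg_near_cells c _ _ p _ _ _ _ _ mesh_le abp pc same_a same_b).
rewrite INR_d_mesh.
have : 0 <= edist aj bj * mesh_unit / (edist ai bi * mesh_unit).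
  by apply: Rle_mult_inv_pos; lra.
by nra.
Qed.

Lemma short_seg_near ai bi aj bj N :
  touches_ball c r ai bi -> 0 < N <= 2 * edist aj bj ->
  cell c (N * mesh_unit) aj = cell c (N * mesh_unit) ai ->
  cell c (N * mesh_unit) bj = cell c (N * mesh_unit) bi ->
  seg_near (sigma * edist aj bj) ai bi aj bj.
Proof.
move=> [[p [abp pc]] _] N_bounds same_a same_b.
have mesh_le : 0 < N * mesh_unit <= N * mesh_unit by have := mesh_unit_gt0; nra.
apply: seg_near_le (seg_near_cells c _ _ p _ _ _ _ _ mesh_le abp pc same_a same_b).
rewrite INR_d_mesh (_ : N * mesh_unit / (N * mesh_unit) = 1);
  last by have h := mesh_unit_gt0; field; nra.
by nra.
Qed.

Lemma signature_near ai bi aj bj :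
  touches_ball c r ai bi -> touches_ball c r aj bj -> signature ai bi = signature aj bj ->
  seg_near (sigma * edist aj bj) ai bi aj bj \/ seg_near (sigma * edist ai bi) aj bj ai bi.
Proof.
move=> touch_i touch_j; rewrite /signature /scale.
have ge1_i := length_class_ge1 _ (proj2 touch_i).
have ge1_j := length_class_ge1 _ (proj2 touch_j).
case: Z.ltb_spec => short_i; case: Z.ltb_spec => short_j [same_tag same_a same_b]; try lia.
- have same_class : length_class (edist aj bj) = length_class (edist ai bi) by lia.
  rewrite same_class in same_a same_b.
  left; apply: (short_seg_near _ _ _ _ _ touch_i _ (esym same_a) (esym same_b)).
  have := IZR_le _ _ ge1_j; have := length_class_le (edist aj bj).
  by rewrite same_class; nra.
- have [le_ji | le_ij] := Rle_lt_dec (edist aj bj) (edist ai bi).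
    by left; apply: (long_seg_near _ _ _ _ touch_i _ le_ji (esym same_a) (esym same_b)); lia.
  by right; apply: (long_seg_near _ _ _ _ touch_j _ _ same_a same_b); [lia | lra].
Qed.

Definition cell_bound : Z := up (8 * INR d / sigma).

Definition cell_range : list Z :=
  List.map (fun n => Z.of_nat n - cell_bound)%Z
    (List.seq 0 (Z.to_nat (2 * cell_bound + 1))).

Definition class_range : list Z := List.map Z.of_nat (List.seq 1 (Z.to_nat long_class)).

Definition signatures : list (Z * list Z * list Z) :=
  list_prod (list_prod class_range (words d cell_range)) (words d cell_range).

Lemma In_cell_range z : (- cell_bound <= z <= cell_bound)%Z -> List.In z cell_range.
Proof.
move=> z_bounds; apply/in_map_iff; exists (Z.to_nat (z + cell_bound)).
by split; [lia | apply/in_seq; lia].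
Qed.

Lemma In_class_range z : (1 <= z <= long_class)%Z -> List.In z class_range.
Proof.
move=> z_bounds; apply/in_map_iff; exists (Z.to_nat z).
by split; [lia | apply/in_seq; lia].
Qed.

Lemma cell_in_range x l N :
  0 < l <= N -> edist x c <= 2 * l ->
  forall z, List.In z (cell c (N * mesh_unit) x) -> List.In z cell_range.
Proof.
move=> l_bounds xc z /in_map_iff [k [<- _]]; apply: In_cell_range.
have mesh_gt0 : 0 < N * mesh_unit by have := mesh_unit_gt0; nra.
set y := (x k - c k) / (N * mesh_unit).
have y_le : Rabs y <= 8 * INR d / sigma.
  have coord_le := Rle_trans _ _ _ (abs_coord_le_vnorm (fun i => x i - c i) k) xc.
  rewrite /y /Rdiv Rabs_mult Rabs_inv (Rabs_right (N * mesh_unit)); last lra.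
  rewrite (_ : 8 * INR d * / sigma = 2 * N * / (N * mesh_unit)).
    by apply: Rmult_le_compat_r; [apply/Rlt_le/Rinv_0_lt_compat | lra].
  by have := INR_d_gt0; rewrite /mesh_unit => ?; field; lra.
have [K_gt _] := archimed (8 * INR d / sigma); rewrite -/cell_bound in K_gt.
have [le_y gt_y] := base_Int_part y.
have := Rle_abs y; have := Rle_abs (- y); rewrite Rabs_Ropp => ? ?.
suff : (- cell_bound - 1 < Int_part y)%Z /\ (Int_part y <= cell_bound)%Z by lia.
by split; [apply: lt_IZR; rewrite minus_IZR opp_IZR | apply: le_IZR]; lra.
Qed.

Lemma signature_in_signatures a b : touches_ball c r a b -> List.In (signature a b) signatures.
Proof.
move=> touch; have [ac bc] := touches_ball_endpoint _ _ _ _ touch.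
have l_gt0 : 0 < edist a b by have := proj2 touch; lra.
have ge1 := length_class_ge1 _ (proj2 touch).
have le_scale : edist a b <= scale (edist a b).
  by rewrite /scale; case: Z.ltb => //; [have := length_class_gt (edist a b); lra | lra].
have cells_in x : edist x c <= 2 * edist a b ->
    forall z, List.In z (cell c (scale (edist a b) * mesh_unit) x) -> List.In z cell_range.
  by apply: (cell_in_range _ (edist a b)); lra.
apply: in_prod; first apply: in_prod.
- have : (0 < long_class)%Z.
    have : 0 < 4 / sigma by apply: Rdiv_lt_0_compat; lra.
    by have := long_class_gt => ? ?; apply: lt_IZR; lra.
  by move=> ?; apply: In_class_range; lia.
- by apply: In_words; [rewrite length_map length_enum_ord | exact: cells_in].
- by apply: In_words; [rewrite length_map length_enum_ord | exact: cells_in].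
Qed.

Lemma length_signatures_le :
  sigma < 1 ->
  INR (List.length signatures) <=
  5 * (19 * INR d) ^ (2 * d) * Rpower sigma (- (2 * INR d + 2)).
Proof.
move=> sigma_lt1; set X := / sigma.
have X_ge1 : 1 <= X by rewrite /X -Rinv_1; apply: Rinv_le_contravar; lra.
have d_ge1' : 1 <= INR d by apply: (le_INR 1); lia.
have -> : Rpower sigma (- (2 * INR d + 2)) = X ^ (2 * d + 2).
  rewrite Rpower_Ropp /X pow_inv -Rpower_pow //.
  by rewrite plus_INR mult_INR /=; congr (/ Rpower _ _); ring.
have [M_gt M_le] := archimed (4 / sigma); rewrite -/long_class in M_gt M_le.
have [K_gt K_le] := archimed (8 * INR d / sigma); rewrite -/cell_bound in K_gt K_le.
have class_count : INR (Z.to_nat long_class) <= 5 * X.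
  have X4 : 0 < 4 / sigma by apply: Rdiv_lt_0_compat; lra.
  rewrite INR_IZR_INZ Z2Nat.id; last by apply: le_IZR; lra.
  by rewrite /Rdiv -/X in M_le; lra.
have cell_count : INR (Z.to_nat (2 * cell_bound + 1)) <= 19 * INR d * X.
  have dX4 : 0 < 8 * INR d / sigma by apply: Rdiv_lt_0_compat; lra.
  rewrite INR_IZR_INZ Z2Nat.id; last by apply: le_IZR; rewrite plus_IZR mult_IZR; lra.
  rewrite plus_IZR mult_IZR; rewrite /Rdiv -/X in K_le.
  have : 1 <= INR d * X by nra.
  lra.
rewrite /signatures !length_prod !length_words !length_map !length_seq.
rewrite !mult_INR !pow_INR.
set Q := INR (Z.to_nat (2 * cell_bound + 1)) in cell_count *.
have Qd : Q ^ d <= (19 * INR d * X) ^ d by apply: pow_incr; split; [exact: pos_INR|].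
have AXd_ge0 : 0 <= (19 * INR d * X) ^ d by apply: pow_le; nra.
apply: (Rle_trans _ (5 * X * (19 * INR d * X) ^ d * (19 * INR d * X) ^ d)).
  apply: Rmult_le_compat; try apply: Rmult_le_compat; try apply: Rmult_le_pos;
    try apply: pow_le; try apply: pos_INR; by [].
rewrite Rpow_mult_distr (_ : (2 * d)%N = (d + d)%coq_nat); last by rewrite plusE addnn mul2n.
rewrite !pow_add (_ : X ^ 2 = X * X); last by ring.
have Xd_ge1 : 1 <= X ^ d by apply: pow_R1_Rle.
have Ad_ge0 : 0 <= (19 * INR d) ^ d by apply: pow_le; lra.
by nra.
Qed.

End Signature.

Definition endpoints {d : nat} (S : pt d -> Prop) : pt d * pt d :=
  epsilon (inhabits (fun _ => 0, fun _ => 0)) (fun ab => forall p, S p <-> seg ab.1 ab.2 p).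

Lemma endpointsP {d : nat} (S : pt d -> Prop) :
  is_segment S -> forall p, S p <-> seg (endpoints S).1 (endpoints S).2 p.
Proof.
move=> [a [b [_ S_ab]]].
by apply: (epsilon_spec _ (fun ab => forall p, S p <-> seg ab.1 ab.2 p)); exists (a, b).
Qed.

Lemma endpoints_touch_ball {d : nat} (i0 : 'I_d) (c : pt d) r S :
  0 < r -> is_segment S -> (exists p, S p /\ closed_ball c r p) ->
  diam (closed_ball c r) <= diam S -> touches_ball c r (endpoints S).1 (endpoints S).2.
Proof.
move=> r_gt0 seg_S [p [Sp pc]] le_diam; have S_ab := endpointsP S seg_S.
split; first by exists p; rewrite -S_ab.
by rewrite -(diam_seg _ _ _ S_ab); apply: Rle_trans (diam_closed_ball_ge i0 c r r_gt0) le_diam.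
Qed.

Lemma NoDup_length_le_injective_in {A B : Type} (f : A -> B) (s : list A) (t : list B) :
  NoDup s -> (forall x y, List.In x s -> List.In y s -> f x = f y -> x = y) ->
  (forall x, List.In x s -> List.In (f x) t) -> (List.length s <= List.length t)%coq_nat.
Proof.
move=> uniq_s f_inj f_in; rewrite -(length_map f).
apply: NoDup_incl_length; first exact: NoDup_map_NoDup_ForallPairs.
by move=> _ /in_map_iff [x [<- x_in]]; apply: f_in.
Qed.

Theorem mainTheorem8 :
  forall d : nat, (1 <= d)%coq_nat ->
  exists C : R,
    forall sigma : R, 0 < sigma < 1 ->
    forall L : list (pt d -> Prop),
      (forall S, In S L -> is_segment S) ->
      exposed sigma L ->
      density_le L (C * Rpower sigma (- (2 * INR d + 2))).
Proof.
move=> d d_ge1; exists (5 * (19 * INR d) ^ (2 * d)).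
move=> sigma [sigma_gt0 sigma_lt1] L L_seg L_exposed c r r_gt0 I I_uniq I_ok.
have i0 : 'I_d by exists 0%N; apply/ltP; lia.
pose S i := List.nth i L (fun _ => False).
pose a i := (endpoints (S i)).1; pose b i := (endpoints (S i)).2.
have S_seg i : In i I -> is_segment (S i) by move=> /I_ok [i_lt _]; apply/L_seg/nth_In.
have touch i : In i I -> touches_ball c r (a i) (b i).
  move=> i_in; have [_ [meet le_diam]] := I_ok i i_in.
  exact: endpoints_touch_ball i0 c r (S i) r_gt0 (S_seg i i_in) meet le_diam.
apply: Rle_trans (length_signatures_le d sigma d_ge1 sigma_gt0 sigma_lt1).
apply/le_INR/(NoDup_length_le_injective_in (fun i => signature d c r sigma (a i) (b i))) => //.
- move=> i j i_in j_in same; case: (Nat.eq_dec i j) => // neq_ij; exfalso.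
  have [[i_lt _] [j_lt _]] := (I_ok i i_in, I_ok j j_in).
  have [Si Sj] := (endpointsP _ (S_seg i i_in), endpointsP _ (S_seg j j_in)).
  case: (signature_near _ _ _ _ d_ge1 sigma_gt0 r_gt0 _ _ _ _ (touch i i_in) (touch j j_in) same).
    by move=> near; apply: (L_exposed i j) => //; exact: shadows_seg_near Si Sj near.
  by move=> near; apply: (L_exposed j i) => //; [lia | exact: shadows_seg_near Sj Si near].
- by move=> i i_in; apply: signature_in_signatures => //; exact: touch.
Qed.
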